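(* For all positive integers $l$ and $m$, the double subdivided star $T_{l,m}$ admits no perfect state transfer between any pair of distinct vertices.
   Context: A subdivided star $SK_{1,l}$ is obtained by identifying exactly one pendant (end) vertex from each of $l$ copies of the path $P_3$; the identified vertex is the coalescence vertex. The double subdivided star $T_{l,m}$ is obtained from $SK_{1,l}$ and $SK_{1,m}$ by adding one edge joining their two coalescence vertices. For a graph $G$ with adjacency matrix $A$, let $U(t)=\exp(itA)$ for $t\in\mathbb{R}$, and let $\mathbf{e}_a$ be the standard basis vector of vertex $a$. $G$ has perfect state transfer between distinct vertices $a,b$ if there is $\tau\in\mathbb{R}$ and $\gamma\in\mathbb{C}$ with $U(\tau)\mathbf{e}_a=\gamma\mathbf{e}_b$. *)

From HB Require Import structures.
From mathcomp Require Import all_boot all_order all_algebra.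
From mathcomp Require Import all_classical all_reals all_analysis.
From mathcomp Require Import complex.
Set Implicit Arguments. Unset Strict Implicit. Unset Printing Implicit Defensive.
Import Order.TTheory GRing.Theory Num.Theory numFieldNormedType.Exports.
Local Open Scope ring_scope.

(* Vertices of the double subdivided star T_{l,m}:
   - inl false / inl true : the coalescence vertices of SK_{1,l} / SK_{1,m};
   - inr (inl (j, false)) / inr (inl (j, true)) : middle / end vertex of the
     j-th copy of P_3 in SK_{1,l};
   - inr (inr (j, false)) / inr (inr (j, true)) : same for SK_{1,m}. *)
Definition dss_vertex (l m : nat) : finType :=
  (bool + (('I_l * bool) + ('I_m * bool)))%type.

Definition dss_arc (l m : nat) (x y : dss_vertex l m) : bool :=
  match x, y with
  | inl false, inl true => true
  | inl false, inr (inl (_, false)) => true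
  | inl true, inr (inr (_, false)) => true
  | inr (inl (j, false)), inr (inl (j', true)) => j == j'
  | inr (inr (j, false)), inr (inr (j', true)) => j == j'
  | _, _ => false
  end.

Definition dss_adj (l m : nat) (x y : dss_vertex l m) : bool :=
  dss_arc x y || dss_arc y x.

Definition dss_n (l m : nat) : nat := #|dss_vertex l m|.

Definition dss_adjmx (R : realType) (l m : nat) : 'M[R]_(dss_n l m) :=
  \matrix_(i, j) (dss_adj (enum_val i) (enum_val j))%:R.

(* Matrix exponential exp(i t A) of a real square matrix A, as a complex
   matrix: entrywise, the limit of the partial sums
   sum_{k<n} (i t)^k / k! A^k, computed separately on real and imaginary parts. *)
Definition expitA_partial (R : realType) (N : nat) (A : 'M[R]_N) (t : R) (n : nat)
  : 'M[R[i]]_N :=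
  \sum_(k < n) ((Complex 0 t) ^+ k / (k`!)%:R) *: (map_mx (fun x => Complex x 0) A) ^+ k.

Definition expitA (R : realType) (N : nat) (A : 'M[R]_N) (t : R) : 'M[R[i]]_N :=
  \matrix_(i, j)
    Complex (limn (fun n : nat => complex.Re (expitA_partial A t n i j) : R))
            (limn (fun n : nat => complex.Im (expitA_partial A t n i j) : R)).

(* Perfect state transfer between distinct vertices a, b of the graph with
   adjacency matrix A: U(tau) e_a = gamma e_b for some real tau, complex gamma.
   Column a of U(tau) is U(tau) e_a. *)
Definition PST (R : realType) (N : nat) (A : 'M[R]_N) (a b : 'I_N) : Prop :=
  exists (tau : R) (gamma : R[i]),
    forall c : 'I_N, expitA A tau c a = gamma * (c == b)%:R.

(* If λ ≠ 0 and μ = λ² is a root of the cubic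
     μ³ - (l+m+3) μ² + (lm+l+m+3) μ - 1,
   then T_{l,m} has a left eigenvector for λ with no zero entry, and since the
   tree is bipartite, flipping the signs on one colour class gives one for -λ.
   Pairing column a of U(τ) with these two eigenvectors, perfect state transfer
   from a to b (at τ ≠ 0; U(0) = I) forces cos(τλ) sin(τλ) = 0, i.e. 2τλ ∈ πℤ,
   so every root of the cubic is k² (π/2τ)² for some integer k.  The cubic has
   three distinct roots summing to l+m+3, hence its root in (0,1) is rational,
   which the rational root theorem forbids. *)

From HB Require Import structures.
From mathcomp Require Import all_boot all_order all_algebra.
From mathcomp Require Import all_classical all_reals all_analysis.
From mathcomp Require Import complex.
From mathcomp Require Import ring lra zify polyrcf.
Import Order.TTheory GRing.Theory Num.Theory numFieldNormedType.Exports.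
Local Open Scope ring_scope.
Local Open Scope classical_set_scope.

Section ExpSeries.
Context {R : realType}.
Implicit Types t lam : R.

Lemma imag_expr_double t j :
  (Complex 0 t) ^+ j.*2 = Complex ((-1) ^+ j * t ^+ j.*2) 0.
Proof.
elim: j => [|j IH]; first by rewrite !expr0 mul1r.
by rewrite doubleS !exprS mulrA IH; simpc; congr Complex; ring.
Qed.

Lemma imag_expr_double_succ t j :
  (Complex 0 t) ^+ j.*2.+1 = Complex 0 ((-1) ^+ j * t ^+ j.*2.+1).
Proof. by rewrite exprS imag_expr_double; simpc; congr Complex; rewrite exprS; ring. Qed.

Lemma imag_expr_fact t k :
  (Complex 0 t) ^+ k / (k`!)%:R = Complex (cos_coeff t k) (sin_coeff t k).
Proof.
rewrite -[(k`!)%:R](rmorph_nat (real_complex R)) -fmorphV.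
have [j [->|->]] : exists j, k = j.*2 \/ k = j.*2.+1.
  by exists k./2; rewrite -{1 3}(odd_double_half k); case: odd; [right|left].
- rewrite imag_expr_double /cos_coeff /sin_coeff /= odd_double doubleK.
  by simpc; congr Complex; ring.
- rewrite imag_expr_double_succ /cos_coeff /sin_coeff /= odd_double /= uphalf_double.
  by simpc; congr Complex; rewrite ?doubleK; ring.
Qed.

Lemma normr_cos_coeff_le t k : `|cos_coeff t k| <= exp_coeff `|t| k.
Proof.
rewrite /cos_coeff /exp_coeff /= !normrM normfV !normr_nat !normrX normrN normr1.
by rewrite expr1n mulr1; case: odd; [rewrite !mul0r divr_ge0 | rewrite mul1r].
Qed.

Lemma normr_sin_coeff_le t k : `|sin_coeff t k| <= exp_coeff `|t| k.
Proof.
rewrite /sin_coeff /exp_coeff /= !normrM normfV !normr_nat !normrX normrN normr1.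
by rewrite expr1n mulr1; case: odd; [rewrite mul1r | rewrite !mul0r divr_ge0].
Qed.

Lemma cos_coeffM t lam k : cos_coeff t k * lam ^+ k = cos_coeff (t * lam) k.
Proof. by rewrite /cos_coeff /= exprMn; ring. Qed.

Lemma sin_coeffM t lam k : sin_coeff t k * lam ^+ k = sin_coeff (t * lam) k.
Proof. by rewrite /sin_coeff /= exprMn; ring. Qed.

Lemma is_cvg_series_exp_dominated (c u : nat -> R) t M : 0 <= M ->
  (forall k, `|c k| <= exp_coeff `|t| k) -> (forall k, `|u k| <= M ^+ k) ->
  cvgn (series (fun k => c k * u k)).
Proof.
move=> M0 hc hu; apply: normed_cvg.
apply: (@series_le_cvg _ _ (exp_coeff (`|t| * M))) => [k|k|k|].
- exact: normr_ge0.
- by apply: exp_coeff_ge0; rewrite mulr_ge0.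
- rewrite /exp_coeff /= normrM exprMn mulrAC.
  by apply: ler_pM => //; exact: hc.
- exact: is_cvg_series_exp_coeff.
Qed.

End ExpSeries.

Section ExpitA.
Context {R : realType} {N : nat} (A : 'M[R]_N).
Implicit Types t lam : R.

Lemma map_mx_complexX k :
  map_mx (fun x => Complex x 0) A ^+ k = map_mx (real_complex R) (A ^+ k).
Proof.
elim: k => [|k IH]; first by apply/matrixP => i j; rewrite !mxE; case: (i == j).
by rewrite !exprSr IH -!mulmxE map_mxM.
Qed.

Lemma expitA_partial_entry t n i j : expitA_partial A t n i j =
  \sum_(k < n) Complex (cos_coeff t k * (A ^+ k) i j) (sin_coeff t k * (A ^+ k) i j).
Proof.
rewrite /expitA_partial summxE; apply: eq_bigr => k _.
by rewrite mxE map_mx_complexX mxE imag_expr_fact; simpc.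
Qed.

Lemma Re_expitA t i j :
  complex.Re (expitA A t i j) = limn (series (fun k => cos_coeff t k * (A ^+ k) i j)).
Proof.
rewrite mxE /=; congr (lim (_ @ \oo)); apply/funext => n.
rewrite expitA_partial_entry /series /= big_mkord.
exact: (raddf_sum (@complex.Re R : Rcomplex R -> R)).
Qed.

Lemma Im_expitA t i j :
  complex.Im (expitA A t i j) = limn (series (fun k => sin_coeff t k * (A ^+ k) i j)).
Proof.
rewrite mxE /=; congr (lim (_ @ \oo)); apply/funext => n.
rewrite expitA_partial_entry /series /= big_mkord.
exact: (raddf_sum (@complex.Im R : Rcomplex R -> R)).
Qed.

Lemma normr_mxpow_le k i j :
  `|(A ^+ k) i j| <= (\sum_i' \sum_j' `|A i' j'|) ^+ k.
Proof.
set s := \sum_i' _; have s0 : 0 <= s by do 2!apply: sumr_ge0 => ? _.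
elim: k i j => [|k IH] i j.
  by rewrite expr0 mxE; case: (i == j); rewrite ?normr1 ?normr0.
rewrite exprSr mxE (le_trans (ler_norm_sum _ _ _)) //.
apply: (@le_trans _ _ (\sum_l s ^+ k * `|A l j|)).
  by apply: ler_sum => l _; rewrite normrM ler_wpM2r.
rewrite -mulr_sumr exprSr ler_wpM2l ?exprn_ge0 //.
by apply: ler_sum => l _; rewrite (bigD1 j) //= lerDl sumr_ge0.
Qed.

Lemma mxpow_left_eigen (w : 'rV[R]_N) lam k :
  w *m A = lam *: w -> w *m A ^+ k = lam ^+ k *: w.
Proof.
move=> wA; elim: k => [|k IH]; first by rewrite expr0 mulmx1 scale1r.
by rewrite exprSr mulmxA IH -scalemxAl wA scalerA -exprSr.
Qed.

Lemma series_mxpow_left_eigen {c : nat -> R} {t} {w : 'rV[R]_N} {lam} a :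
  (forall k, `|c k| <= exp_coeff `|t| k) -> w *m A = lam *: w ->
  \sum_j w 0 j * limn (series (fun k => c k * (A ^+ k) j a)) =
  w 0 a * limn (series (fun k => c k * lam ^+ k)).
Proof.
move=> hc wA.
have cvA j : cvgn (series (fun k => c k * (A ^+ k) j a)).
  apply: is_cvg_series_exp_dominated _ hc (fun k => normr_mxpow_le k j a).
  by do 2!apply: sumr_ge0 => ? _.
have cvlam : cvgn (series (fun k => c k * lam ^+ k)).
  by apply: is_cvg_series_exp_dominated (normr_ge0 lam) hc _ => k; rewrite normrX.
have sumE : (fun n => \sum_j w 0 j * series (fun k => c k * (A ^+ k) j a) n) =
            (fun n => w 0 a * series (fun k => c k * lam ^+ k) n).
  apply/funext => n; rewrite /series /=.
  under eq_bigr do rewrite big_distrr /=.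
  rewrite exchange_big /= big_distrr /=; apply: eq_bigr => k _.
  have := congr1 (fun v : 'rV_N => v 0 a) (mxpow_left_eigen _ _ k wA); rewrite !mxE => eigk.
  under eq_bigr do rewrite mulrCA.
  by rewrite -mulr_sumr eigk; ring.
have lhs_cvg : \sum_j w 0 j * series (fun k => c k * (A ^+ k) j a) n @[n --> \oo] -->
               \sum_j w 0 j * limn (series (fun k => c k * (A ^+ k) j a)).
  by apply: cvg_big; [exact: add_continuous | move=> j _; exact: cvgMl_tmp].
have rhs_cvg : w 0 a * series (fun k => c k * lam ^+ k) n @[n --> \oo] -->
               w 0 a * limn (series (fun k => c k * lam ^+ k)).
  exact: cvgMl_tmp.
rewrite sumE in lhs_cvg.
by rewrite -(cvg_lim _ lhs_cvg) // -(cvg_lim _ rhs_cvg).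
Qed.

Lemma left_eigen_Re_expitA t a {w : 'rV[R]_N} {lam} : w *m A = lam *: w ->
  \sum_j w 0 j * complex.Re (expitA A t j a) = w 0 a * cos (t * lam).
Proof.
move=> wA; under eq_bigr do rewrite Re_expitA.
rewrite (series_mxpow_left_eigen a (normr_cos_coeff_le t) wA) [in RHS]unlock.
congr (_ * _); congr (lim (_ @ \oo)); apply/funext => n.
by apply: eq_bigr => k _; rewrite cos_coeffM.
Qed.

Lemma left_eigen_Im_expitA t a {w : 'rV[R]_N} {lam} : w *m A = lam *: w ->
  \sum_j w 0 j * complex.Im (expitA A t j a) = w 0 a * sin (t * lam).
Proof.
move=> wA; under eq_bigr do rewrite Im_expitA.
rewrite (series_mxpow_left_eigen a (normr_sin_coeff_le t) wA) [in RHS]unlock.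
congr (_ * _); congr (lim (_ @ \oo)); apply/funext => n.
by apply: eq_bigr => k _; rewrite sin_coeffM.
Qed.

Lemma expitA0 : expitA A 0 = 1%:M.
Proof.
apply/matrixP => i j.
have Re0 : limn (series (fun k => cos_coeff 0 k * (A ^+ k) i j)) = (i == j)%:R.
  apply: lim_near_cst => //; near=> n; rewrite -[n]prednK; last by near: n.
  rewrite /series /= big_nat_recl // big1 ?addr0 => [|k _].
    by rewrite /cos_coeff /= !expr0 mxE fact0 expr0z !mul1r invr1 ?mulr1 mul1r.
  by rewrite /cos_coeff /= exprS !(mulr0, mul0r).
have Im0 : limn (series (fun k => sin_coeff 0 k * (A ^+ k) i j)) = 0.
  rewrite [X in lim (X @ _)](_ : _ = fun=> 0) ?lim_cst //; apply/funext => m.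
  rewrite /series /= big1 // => k _.
  by rewrite /sin_coeff /= expr0n; case: k => [|k] /=; rewrite !(mulr0, mul0r).
apply/eqP; rewrite eq_complex Re_expitA Im_expitA Re0 Im0 mxE.
by case: (i == j); rewrite /= ?eqxx.
Unshelve. all: by end_near.
Qed.

Lemma pst_left_eigen_cos_sin {tau gamma a b} {w w' : 'rV[R]_N} {lam sa sb} :
  (forall c, expitA A tau c a = gamma * (c == b)%:R) ->
  w *m A = lam *: w -> w' *m A = (- lam) *: w' ->
  w' 0 a = sa * w 0 a -> w' 0 b = sb * w 0 b -> sb != 0 -> w 0 a != 0 ->
  cos (tau * lam) * sin (tau * lam) = 0.
Proof.
move=> col wA wA' wa' wb' sb0 wa0.
have colRe (v : 'rV[R]_N) :
    \sum_j v 0 j * complex.Re (expitA A tau j a) = v 0 b * complex.Re gamma.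
  under eq_bigr do rewrite col.
  by rewrite (bigD1 b) //= eqxx mulr1 big1 ?addr0 // => j /negbTE ->; rewrite !mulr0.
have colIm (v : 'rV[R]_N) :
    \sum_j v 0 j * complex.Im (expitA A tau j a) = v 0 b * complex.Im gamma.
  under eq_bigr do rewrite col.
  by rewrite (bigD1 b) //= eqxx mulr1 big1 ?addr0 // => j /negbTE ->; rewrite !mulr0.
have e1 := left_eigen_Re_expitA tau a wA; rewrite colRe in e1.
have e2 := left_eigen_Im_expitA tau a wA; rewrite colIm in e2.
have e3 := left_eigen_Re_expitA tau a wA'; rewrite colRe mulrN cosN wa' wb' in e3.
have e4 := left_eigen_Im_expitA tau a wA'; rewrite colIm mulrN sinN wa' wb' in e4.
set C := cos _ in e1 e3 *; set S := sin _ in e2 e4 *.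
have cos_part : (sb - sa) * (w 0 a * C) = 0.
  transitivity (sb * (w 0 a * C - w 0 b * complex.Re gamma) +
                (sb * w 0 b * complex.Re gamma - sa * w 0 a * C)); first by ring.
  by rewrite e1 e3 !subrr mulr0 addr0.
have sin_part : (sb + sa) * (w 0 a * S) = 0.
  transitivity (sb * (w 0 a * S - w 0 b * complex.Im gamma) +
                (sb * w 0 b * complex.Im gamma + sa * w 0 a * S)); first by ring.
  by rewrite e2 e4 subrr mulrN addNr mulr0 addr0.
have : (sb *+ 2 * w 0 a) * (C * S) = 0.
  transitivity (S * ((sb - sa) * (w 0 a * C)) + C * ((sb + sa) * (w 0 a * S))).
    by ring.
  by rewrite cos_part sin_part !mulr0 addr0.
move/eqP; rewrite mulf_eq0 => /orP[|/eqP //].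
by rewrite mulf_eq0 mulrn_eq0 /= (negbTE sb0) (negbTE wa0).
Qed.

End ExpitA.

Lemma sin_intpi (R : realType) (k : int) : sin (k%:~R * pi) = 0 :> R.
Proof.
have sin_natpi n : sin (n%:R * pi) = 0 :> R.
  by rewrite mulr_natl -[_ *+ n]add0r (alternatingn (@sinDpi R)) sin0 mulr0.
case: k => n; first exact: sin_natpi.
by rewrite NegzE mulrNz mulNr sinN -pmulrn sin_natpi oppr0.
Qed.

Lemma sin_eq0_intpi (R : realType) (x : R) :
  sin x = 0 -> exists k : int, x = k%:~R * pi.
Proof.
move=> sx0; set k := Num.floor (x / pi); exists k.
have pi0 := @pi_gt0 R.
set r := x - k%:~R * pi.
have r0 : 0 <= r by rewrite subr_ge0 -ler_pdivlMr // Num.Theory.floor_le.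
have rpi : r < pi.
  rewrite ltrBlDr -[X in X + _]mul1r -mulrDl -ltr_pdivrMr // addrC.
  by have := Num.Theory.floorD1_gt (x / pi); rewrite intrD.
have sr0 : sin r = 0 by rewrite /r sinB sx0 mul0r sin_intpi mulr0 subrr.
have r_le0 : r <= 0.
  rewrite leNgt; apply/negP => r_gt0.
  by move: (@sin_gt0_pi R r); rewrite sr0 ltxx r_gt0 rpi => /(_ isT).
by apply/eqP; rewrite -subr_eq0 -/r eq_le r_le0.
Qed.

Lemma monic_cubic_roots_sum (R : idomainType) (S T x y z : R) :
  let p u := u ^+ 3 - S * u ^+ 2 + T * u - 1 in
  p x = 0 -> p y = 0 -> p z = 0 -> x != y -> x != z -> y != z -> x + y + z = S.
Proof.
move=> p px py pz xy xz yz.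
pose q u v := u ^+ 2 + u * v + v ^+ 2 - S * (u + v) + T.
have q0 u v : u != v -> p u = 0 -> p v = 0 -> q u v = 0.
  move=> uv pu pv; have : (u - v) * q u v = p u - p v by rewrite /p /q; ring.
  by rewrite pu pv subrr => /eqP; rewrite mulf_eq0 subr_eq0 (negbTE uv) => /eqP.
have : (y - z) * (x + y + z - S) = q x y - q x z by rewrite /q; ring.
rewrite !q0 // subrr => /eqP; rewrite mulf_eq0 subr_eq0 (negbTE yz) subr_eq0.
by move/eqP.
Qed.

Lemma proper_fraction_not_cubic_root (P Q S T : nat) : (0 < P)%N -> (P < Q)%N ->
  (P ^ 3 + T * P * Q ^ 2 <> S * P ^ 2 * Q + Q ^ 3)%N.
Proof.
move=> P0 PQ E.
set g := gcdn P Q; have g0 : (0 < g)%N by rewrite gcdn_gt0 P0.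
have [P' eP] : exists P', P = (P' * g)%N by exists (P %/ g)%N; rewrite divnK // dvdn_gcdl.
have [Q' eQ] : exists Q', Q = (Q' * g)%N by exists (Q %/ g)%N; rewrite divnK // dvdn_gcdr.
have cop : coprime P' Q'.
  by rewrite /coprime -(eqn_pmul2r g0) mul1n muln_gcdl -eP -eQ.
have E' : (P' ^ 3 + T * P' * Q' ^ 2 = S * P' ^ 2 * Q' + Q' ^ 3)%N.
  apply/eqP; rewrite -(@eqn_pmul2l (g ^ 3)) ?expn_gt0 ?g0 //; apply/eqP.
  have -> : (g ^ 3 * (P' ^ 3 + T * P' * Q' ^ 2) = P ^ 3 + T * P * Q ^ 2)%N.
    by rewrite eP eQ; ring.
  have -> : (g ^ 3 * (S * P' ^ 2 * Q' + Q' ^ 3) = S * P ^ 2 * Q + Q ^ 3)%N.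
    by rewrite eP eQ; ring.
  exact: E.
have dQ : (Q' %| P' ^ 3)%N.
  have : (Q' %| P' ^ 3 + T * P' * Q' ^ 2)%N.
    by rewrite E' dvdn_add // ?dvdn_mull // dvdn_exp.
  by rewrite dvdn_addl // dvdn_mull // dvdn_exp.
have : coprime Q' (P' ^ 3) by rewrite coprimeXr // coprime_sym.
rewrite /coprime (gcdn_idPl dQ) => /eqP Q1.
by move: PQ P0; rewrite eP eQ Q1 ltn_pmul2r // ltnS leqn0 => /eqP ->.
Qed.

Lemma sumr_prod_bool (V : nmodType) (I : finType) (F : I * bool -> V) :
  \sum_p F p = \sum_i F (i, true) + \sum_i F (i, false).
Proof.
rewrite -big_split /= -[RHS](eq_bigr _ (fun i _ => big_bool _ (fun b => F (i, b)))).
by rewrite pair_bigA; apply: eq_bigr => -[].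
Qed.

Lemma sumr_mul_eq (R : pzSemiRingType) (I : finType) (j : I) (c : R) :
  \sum_i c * (i == j)%:R = c.
Proof. by rewrite (bigD1 j) //= eqxx mulr1 big1 ?addr0 // => i /negbTE ->; rewrite mulr0. Qed.

Lemma sumr_mul_eq_sym (R : pzSemiRingType) (I : finType) (j : I) (c : R) :
  \sum_i c * (j == i)%:R = c.
Proof. by under eq_bigr do rewrite eq_sym; exact: sumr_mul_eq. Qed.

Section DoubleStar.
Variables (R : realType) (l m : nat).
Implicit Types lam mu : R.

Definition dss_cubic mu : R :=
  mu ^+ 3 - (l + m + 3)%:R * mu ^+ 2 + (l * m + l + m + 3)%:R * mu - 1.

Definition dss_eigvec lam (x : dss_vertex l m) : R :=
  let mu := lam ^+ 2 in
  match x with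
  | inl false => lam * (mu - 1) ^+ 2
  | inl true => mu * (mu - 1) * (mu - l%:R - 1)
  | inr (inl (_, false)) => mu * (mu - 1)
  | inr (inl (_, true)) => lam * (mu - 1)
  | inr (inr (_, false)) => lam * mu * (mu - l%:R - 1)
  | inr (inr (_, true)) => mu * (mu - l%:R - 1)
  end.

Lemma dss_eigvecP lam y : dss_cubic (lam ^+ 2) = 0 ->
  \sum_x dss_eigvec lam x * (dss_adj x y)%:R = lam * dss_eigvec lam y.
Proof.
move=> hp.
rewrite big_sumType big_bool big_sumType !sumr_prod_bool /=.
case: y => [[]|[[j []]|[j []]]]; rewrite /dss_adj /= ?orbF.
all: rewrite ?mulr0 ?mulr1 ?big1_eq ?sumr_const ?card_ord.
all: rewrite ?sumr_mul_eq ?sumr_mul_eq_sym ?addr0 ?add0r.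
all: try by ring.
2,3: by under eq_bigr => ? _ do rewrite orbF; rewrite sumr_mul_eq; ring.
(* Only the equation at the right centre needs [lam ^+ 2] to be a root. *)
apply/eqP; rewrite -subr_eq0; apply/eqP.
transitivity (- lam * dss_cubic (lam ^+ 2)); last by rewrite hp mulr0.
by rewrite /dss_cubic; ring.
Qed.

Definition dss_sign (x : dss_vertex l m) : R :=
  match x with
  | inl false | inr (inl (_, true)) | inr (inr (_, false)) => -1
  | _ => 1
  end.

Lemma dss_eigvecN lam x : dss_eigvec (- lam) x = dss_sign x * dss_eigvec lam x.
Proof. by case: x => [[]|[[j []]|[j []]]]; rewrite /= sqrrN; ring. Qed.

Lemma dss_sign_neq0 x : dss_sign x != 0.
Proof. by case: x => [[]|[[j []]|[j []]]]; rewrite /= ?oppr_eq0 oner_eq0. Qed.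

Lemma dss_eigvec_neq0 lam x :
  lam != 0 -> lam ^+ 2 != 1 -> lam ^+ 2 != l.+1%:R -> dss_eigvec lam x != 0.
Proof.
move=> lam0 lam1 laml.
have e1 : lam ^+ 2 - 1 != 0 by rewrite subr_eq0.
have e2 : lam ^+ 2 - l%:R - 1 != 0 by rewrite -addrA -opprD natr1 subr_eq0.
have e3 : lam ^+ 2 != 0 by rewrite expf_neq0.
by case: x => [[]|[[j []]|[j []]]]; rewrite /= ?mulf_neq0 ?expf_neq0.
Qed.

Local Notation A := (dss_adjmx R l m).

Definition dss_eigrow lam : 'rV[R]_(dss_n l m) := \row_j dss_eigvec lam (enum_val j).

Lemma dss_eigrowP lam :
  dss_cubic (lam ^+ 2) = 0 -> dss_eigrow lam *m A = lam *: dss_eigrow lam.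
Proof.
move=> hp; apply/rowP => c; rewrite !mxE -(dss_eigvecP _ _ hp).
under eq_bigr do rewrite !mxE.
by rewrite -(big_enum_val (fun x => dss_eigvec lam x * (dss_adj x (enum_val c))%:R)).
Qed.

Lemma dss_pst_cos_sin {tau gamma a b} lam :
  (forall c, expitA A tau c a = gamma * (c == b)%:R) ->
  dss_cubic (lam ^+ 2) = 0 -> lam != 0 -> lam ^+ 2 != 1 -> lam ^+ 2 != l.+1%:R ->
  cos (tau * lam) * sin (tau * lam) = 0.
Proof.
move=> col hp lam0 lam1 laml.
have hpN : dss_cubic ((- lam) ^+ 2) = 0 by rewrite sqrrN.
apply: (pst_left_eigen_cos_sin _ col (dss_eigrowP _ hp) (dss_eigrowP _ hpN)).
- by rewrite !mxE dss_eigvecN.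
- by rewrite !mxE dss_eigvecN.
- exact: dss_sign_neq0.
- by rewrite mxE dss_eigvec_neq0.
Qed.

Lemma dss_cubic1 : dss_cubic 1 = (l * m)%:R.
Proof. by rewrite /dss_cubic !natrD !natrM; ring. Qed.

Lemma dss_cubic_lS : dss_cubic l.+1%:R = - l%:R ^+ 2.
Proof. by rewrite /dss_cubic -addn1 !natrD !natrM; ring. Qed.

Lemma dss_cubic_root_gt0 mu : dss_cubic mu = 0 -> 0 < mu.
Proof.
move=> p0; rewrite ltNge; apply/negP => mu_le0.
have S0 : 0 <= (l + m + 3)%:R :> R by [].
have T0 : 0 <= (l * m + l + m + 3)%:R :> R by [].
have : dss_cubic mu < 0 by rewrite /dss_cubic; nra.
by rewrite p0 ltxx.
Qed.

Hypotheses (l_gt0 : (0 < l)%N) (m_gt0 : (0 < m)%N).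

Lemma dss_pst_root_sq {tau gamma a b mu} : tau != 0 ->
  (forall c, expitA A tau c a = gamma * (c == b)%:R) -> dss_cubic mu = 0 ->
  exists k : int, mu = k%:~R ^+ 2 * (pi / (tau *+ 2)) ^+ 2.
Proof.
move=> tau0 col pmu.
have mu_gt0 := dss_cubic_root_gt0 _ pmu.
set lam := Num.sqrt mu.
have lam2 : lam ^+ 2 = mu by rewrite sqr_sqrtr // ltW.
have lam0 : lam != 0 by rewrite gt_eqF // sqrtr_gt0.
have mu1 : mu != 1.
  apply/eqP => mu1; move: pmu; rewrite mu1 dss_cubic1 => /eqP.
  by rewrite pnatr_eq0 muln_eq0 !eqn0Ngt l_gt0 m_gt0.
have mul : mu != l.+1%:R.
  apply/eqP => mul; move: pmu; rewrite mul dss_cubic_lS => /eqP.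
  by rewrite oppr_eq0 sqrf_eq0 pnatr_eq0 eqn0Ngt l_gt0.
have := dss_pst_cos_sin lam col; rewrite lam2 => /(_ pmu lam0 mu1 mul) cs.
have [k hk] : exists k : int, (tau * lam) *+ 2 = k%:~R * pi.
  by apply: sin_eq0_intpi; rewrite sin_mulr2n cs mul0rn.
exists k; rewrite -lam2 (_ : lam = k%:~R * pi / (tau *+ 2)) ?exprMn ?mulrA //.
by rewrite -hk; field.
Qed.

Lemma dss_cubic_ivt u v : u <= v -> dss_cubic u * dss_cubic v < 0 ->
  exists2 x, dss_cubic x = 0 & u < x < v.
Proof.
move=> uv huv.
pose q : {poly R} := 'X^3 - ((l + m + 3)%:R)%:P * 'X^2 +
  ((l * m + l + m + 3)%:R)%:P * 'X - 1.
have qE w : q.[w] = dss_cubic w by rewrite /q /dss_cubic !hornerE.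
have hq : q.[u] * q.[v] < 0 by rewrite !qE.
have [x xuv /rootP qx] := poly_ivtoo uv hq.
by exists x; [rewrite -qE | rewrite in_itv in xuv].
Qed.

Lemma dss_cubic_roots : exists x y z,
  [/\ dss_cubic x = 0, dss_cubic y = 0 & dss_cubic z = 0] /\ [/\ x < 1, x < y & y < z].
Proof.
have l0 : 0 < l%:R :> R by rewrite ltr0n.
have p0 : dss_cubic 0 = -1 by rewrite /dss_cubic; ring.
have pS : dss_cubic (l + m + 3)%:R = (l * m + l + m + 3)%:R * (l + m + 3)%:R - 1.
  by rewrite /dss_cubic; ring.
have [x px /andP[_ x1]] : exists2 x, dss_cubic x = 0 & 0 < x < 1.
  by apply: dss_cubic_ivt => //; rewrite p0 dss_cubic1 mulN1r oppr_lt0 ltr0n muln_gt0 l_gt0.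
have [y py /andP[y1 yl]] : exists2 y, dss_cubic y = 0 & 1 < y < l.+1%:R.
  apply: dss_cubic_ivt; first by rewrite ler1n.
  rewrite dss_cubic1 dss_cubic_lS mulrN oppr_lt0 mulr_gt0 ?exprn_gt0 //.
  by rewrite ltr0n muln_gt0 l_gt0.
have [z pz /andP[lz _]] : exists2 z, dss_cubic z = 0 & l.+1%:R < z < (l + m + 3)%:R.
  apply: dss_cubic_ivt; first by rewrite ler_nat; lia.
  by rewrite dss_cubic_lS pS mulNr oppr_lt0 mulr_gt0 ?exprn_gt0 // subr_gt0 -natrM ltr1n.
exists x, y, z; split; split => //; first exact: lt_trans x1 y1.
exact: lt_trans yl lz.
Qed.

Lemma dss_cubic_roots_not_square_multiples {x y z rho} {k1 k2 k3 : int} :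
  dss_cubic x = 0 -> dss_cubic y = 0 -> dss_cubic z = 0 -> x < 1 -> x < y -> y < z ->
  x = k1%:~R ^+ 2 * rho -> y = k2%:~R ^+ 2 * rho -> z = k3%:~R ^+ 2 * rho -> False.
Proof.
move=> px py pz x1 xy yz ex ey ez.
have x0 := dss_cubic_root_gt0 _ px.
have sum : x + y + z = (l + m + 3)%:R.
  have := @monic_cubic_roots_sum R _ (l * m + l + m + 3)%:R x y z px py pz.
  by apply; rewrite lt_eqF // (lt_trans xy).
have k10 : k1 != 0 by move: x0; rewrite ex; apply: contraTneq => ->; rewrite expr0n mul0r ltxx.
set P := ((l + m + 3) * `|k1| ^ 2)%N.
set Q := (`|k1| ^ 2 + `|k2| ^ 2 + `|k3| ^ 2)%N.
have sqr_absz (k : int) : (`|k| ^ 2)%:R = k%:~R ^+ 2 :> R.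
  by rewrite natrX natr_absz intr_norm real_normK // num_real.
have hQ : x * Q%:R = P%:R.
  by rewrite /P /Q !natrD natrM !sqr_absz -sum ex ey ez; ring.
have Q0 : (0 < Q)%N by rewrite /Q !addn_gt0 expn_gt0 absz_gt0 k10.
have P0 : (0 < P)%N by rewrite -(ltr0n R) -hQ mulr_gt0 // ltr0n.
have PQ : (P < Q)%N by rewrite -(ltr_nat R) -hQ gtr_pMl // ltr0n.
clearbody P Q.
apply: (proper_fraction_not_cubic_root _ _ (l + m + 3) (l * m + l + m + 3) P0 PQ).
apply/eqP; rewrite -(eqr_nat R) !natrD !natrM -hQ -subr_eq0; apply/eqP.
transitivity ((Q%:R : R) ^+ 3 * dss_cubic x); last by rewrite px mulr0.
by rewrite /dss_cubic !natrD !natrM; ring.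
Qed.

End DoubleStar.

Theorem theorem3p1 (R : realType) (l m : nat) :
  (0 < l)%N -> (0 < m)%N ->
  forall a b : 'I_(dss_n l m), a != b -> ~ PST (dss_adjmx R l m) a b.
Proof.
move=> l0 m0 a b ab [tau [gamma col]].
have [tau0|tau0] := eqVneq tau 0.
  have := col a; rewrite tau0 expitA0 mxE eqxx (negbTE ab) mulr0 => /eqP.
  by rewrite oner_eq0.
have [x [y [z [[px py pz] [x1 xy yz]]]]] := dss_cubic_roots R l m l0 m0.
have [k1 ex] := dss_pst_root_sq R l m l0 m0 tau0 col px.
have [k2 ey] := dss_pst_root_sq R l m l0 m0 tau0 col py.
have [k3 ez] := dss_pst_root_sq R l m l0 m0 tau0 col pz.
exact: (dss_cubic_roots_not_square_multiples R l m px py pz x1 xy yz ex ey ez).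
Qed.
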